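(* For every $n$ such that $Y_n=k\in\{1,\dots,N-1\}$: (1) if $Y_{n+1}=k+1$ then $\begin{pmatrix}U_{n+1}\\ V_{n+1}\end{pmatrix}=\bar B_k^+\begin{pmatrix}U_n\\ V_n\end{pmatrix}$ with $\bar B_k^+=\begin{pmatrix}1-\frac{N-k}{2N(k+1)} & \frac{N-k}{2N(k+1)}\\ 0 & 1\end{pmatrix}$; (2) if $Y_{n+1}=k-1$ then $\begin{pmatrix}U_{n+1}\\ V_{n+1}\end{pmatrix}=\bar B_k^-\begin{pmatrix}U_n\\ V_n\end{pmatrix}$ with $\bar B_k^-=\begin{pmatrix}1 & 0\\ \frac{k}{2N(N-k+1)} & 1-\frac{k}{2N(N-k+1)}\end{pmatrix}$; (3) if $Y_{n+1}=k$ then $\begin{pmatrix}U_{n+1}\\ V_{n+1}\end{pmatrix}=\bar B_k^{(0)}\begin{pmatrix}U_n\\ V_n\end{pmatrix}$ with $$\bar B_k^{(0)}=\frac{k^2}{k^2+(1+s)(N-k)^2}\begin{pmatrix}1-\frac{N-k}{2kN} & \frac{N-k}{2kN}\\ 0 & 1\end{pmatrix}+\frac{(1+s)(N-k)^2}{k^2+(1+s)(N-k)^2}\begin{pmatrix}1 & 0\\ \frac{k}{2N(N-k)} & 1-\frac{k}{2N(N-k)}\end{pmatrix}.$$ In particular, if $T^Y_0<T^Y_N$ then $(U_{T^Y_0},V_{T^Y_0})^T=\begin{pmatrix}1&0\\ \frac{1}{2N^2}&\frac{2N^2-1}{2N^2}\end{pmatrix}(U_{T^Y_0-1},V_{T^Y_0-1})^T$,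 and if $T^Y_N<T^Y_0$ then $(U_{T^Y_N},V_{T^Y_N})^T=\begin{pmatrix}\frac{2N^2-1}{2N^2}&\frac{1}{2N^2}\\ 0&1\end{pmatrix}(U_{T^Y_N-1},V_{T^Y_N-1})^T$.
   Context: Biparental Moran model with selection at death. Fix an integer $N\ge 2$ and a real $s>0$; let $I=\{1,\dots,N\}$ be the set of sites, each occupied by one individual which is either advantaged or disadvantaged. Let $\mathcal{Y}_n\subseteq I$ be the set of sites of advantaged individuals at time $n\in\mathbb{Z}_+$ ($\mathcal{Y}_0$ is a given initial set) and $Y_n=|\mathcal{Y}_n|$. At each time step $n$, conditionally on the past: a ''mother'' site $\mu_n$ and a ''father'' site $\pi_n$ are drawn independently and uniformly from $I$, and independently a site $\kappa_n$ is drawn with $\mathbb{P}(\kappa_n=i)$ proportional to the death weight of $i$, which equals $1$ if $i\in\mathcal{Y}_n$ and $1+s$ if $i\notin\mathcal{Y}_n$. The individual at $\kappa_n$ dies and is replaced by an offspring of $\mu_n$ and $\pi_n$, whose type is that of the mother: $\mathcal{Y}_{n+1}=\mathcal{Y}_n\cup\{\kappa_n\}$ if $\mu_n\in\mathcal{Y}_n$ and $\mathcal{Y}_{n+1}=\mathcal{Y}_n\setminus\{\kappa_n\}$ if $\mu_n\notin\mathcal{Y}_n$; all other individuals are unchanged. Pedigree and ancestral weights: $\mathcal{G}_N$ denotes the random oriented graph on $I\times\mathbb{Z}_+$ with, for each $n$, arrows from $(\kappa_n,n+1)$ to $(\mu_n,n)$ and to $(\pi_n,n)$, and from $(i,n+1)$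 to $(i,n)$ for every $i\neq\kappa_n$. For $n\ge0$, the genealogy of a neutral gene sampled at time $n$ is the process $(X^{(n)}_k)_{0\le k\le n}$ which, conditionally on $\mathcal{G}_N$, is a Markov chain with: if $X^{(n)}_k=x\neq\kappa_{n-k-1}$ then $X^{(n)}_{k+1}=x$, and if $X^{(n)}_k=\kappa_{n-k-1}$ then $X^{(n)}_{k+1}$ equals $\mu_{n-k-1}$ or $\pi_{n-k-1}$ with probability $1/2$ each. Set $A_n(i,j)=\mathbb{P}(X^{(n)}_n=j\mid X^{(n)}_0=i,\mathcal{G}_N)$ and $$\Xi^A_n=\frac{1}{Y_n}\sum_{l\in\mathcal{Y}_n}\sum_{l'\in\mathcal{Y}_0}A_n(l,l'),\qquad \Xi^B_n=\frac{1}{N-Y_n}\sum_{l\notin\mathcal{Y}_n}\sum_{l'\in\mathcal{Y}_0}A_n(l,l')$$ (when the denominators are nonzero). Let $\mathcal{F}^Y_n=\sigma(Y_0,\dots,Y_n)$, $U_n=\mathbb{E}(\Xi^A_n\mid\mathcal{F}^Y_n)$, $V_n=\mathbb{E}(\Xi^B_n\mid\mathcal{F}^Y_n)$ (so $U_0=1$, $V_0=0$). For $y\in\{0,\dots,N\}$, $T^Y_y=\inf\{n:Y_n=y\}$ (with $\inf\emptyset=\infty$). *)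

From HB Require Import structures.
From mathcomp Require Import all_boot all_order all_algebra.
Set Implicit Arguments. Unset Strict Implicit. Unset Printing Implicit Defensive.
Import Order.TTheory GRing.Theory Num.Theory.
Local Open Scope ring_scope.

Section Moran.
Variables (R : realFieldType) (N : nat) (s : R).

(* One time step draws (mother mu_n, father pi_n, killed site kappa_n). *)
Definition draw := ('I_N * 'I_N * 'I_N)%type.
Definition d_mu (d : draw) : 'I_N := d.1.1.
Definition d_pi (d : draw) : 'I_N := d.1.2.
Definition d_ka (d : draw) : 'I_N := d.2.

(* Update of the set of advantaged sites. *)
Definition step (Y : {set 'I_N}) (d : draw) : {set 'I_N} :=
  if d_mu d \in Y then d_ka d |: Y else Y :\ d_ka d.

Definition config (Y0 : {set 'I_N}) (ds : seq draw) : {set 'I_N} :=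
  foldl step Y0 ds.

Definition dweight (Y : {set 'I_N}) (i : 'I_N) : R :=
  if i \in Y then 1 else 1 + s.

Definition tprob (Y : {set 'I_N}) (d : draw) : R :=
  (N%:R)^-1 * (N%:R)^-1 * (dweight Y (d_ka d) / \sum_(j : 'I_N) dweight Y j).

Fixpoint pathprob (Y : {set 'I_N}) (ds : seq draw) : R :=
  match ds with
  | [::] => 1
  | d :: ds' => tprob Y d * pathprob (step Y d) ds'
  end.

Definition Ypath (Y0 : {set 'I_N}) (ds : seq draw) : seq nat :=
  [seq #|config Y0 (take i ds)| | i <- iota 0 (size ds).+1].

(* Ancestral weights: genrev (rev ds) i j = A_n(i,j) where n = size ds,
   computed by one backward step of the genealogy at a time. *)
Fixpoint genrev (rds : seq draw) (i j : 'I_N) : R :=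
  match rds with
  | [::] => (i == j)%:R
  | d :: rds' =>
      if i == d_ka d then (genrev rds' (d_mu d) j + genrev rds' (d_pi d) j) / 2
      else genrev rds' i j
  end.
Definition Aw (ds : seq draw) (i j : 'I_N) : R := genrev (rev ds) i j.

Definition XiA (Y0 : {set 'I_N}) (ds : seq draw) : R :=
  (#|config Y0 ds|%:R)^-1 *
  \sum_(l in config Y0 ds) \sum_(l' in Y0) Aw ds l l'.
Definition XiB (Y0 : {set 'I_N}) (ds : seq draw) : R :=
  ((N - #|config Y0 ds|)%:R)^-1 *
  \sum_(l in ~: config Y0 ds) \sum_(l' in Y0) Aw ds l l'.

Definition Yprob (Y0 : {set 'I_N}) (n : nat) (y : seq nat) : R :=
  \sum_(ds : n.-tuple draw | Ypath Y0 ds == y) pathprob Y0 ds.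

Definition condE (X : seq draw -> R) (Y0 : {set 'I_N}) (n : nat)
    (y : seq nat) : R :=
  (\sum_(ds : n.-tuple draw | Ypath Y0 ds == y) pathprob Y0 ds * X ds)
  / Yprob Y0 n y.

Definition Ucond (Y0 : {set 'I_N}) (n : nat) (y : seq nat) : R :=
  condE (XiA Y0) Y0 n y.
Definition Vcond (Y0 : {set 'I_N}) (n : nat) (y : seq nat) : R :=
  condE (XiB Y0) Y0 n y.

End Moran.

(* Given the Y-path up to time n, the next draw is distributed according to the current
   configuration only, and on the event that Y_n = k every compatible configuration has k
   advantaged sites.  The draws changing Y_n by a prescribed amount split into classes
   (mother advantaged or not, killed individual advantaged or not) on which the death
   probability is constant and mother, father and killed site are independent and uniform on
   their sides.  Since the newborn's ancestral weight is the mean of its parents' weights, the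
   new averages of the weights over the advantaged and the disadvantaged sites are affine in
   the weights of mother, father and killed site; averaging over a class replaces these by
   the mean over the mother's side, the overall mean and the mean over the killed site's
   side.  This expresses U_{n+1} and V_{n+1} through U_n and V_n with coefficients depending
   on k only; absorption at 0 (resp. N) is the downward step from k = 1 (resp. upward step
   from k = N - 1). *)

From HB Require Import structures.
From mathcomp Require Import all_boot all_order all_algebra.
From mathcomp Require Import ring lra zify.
Import Order.TTheory GRing.Theory Num.Theory.
Set Implicit Arguments. Unset Strict Implicit. Unset Printing Implicit Defensive.
Local Open Scope ring_scope.

Section SetUpdate.
Variable T : finType.
Implicit Types (S : {set T}) (j x : T) (b c : bool).

Definition upd b S j : {set T} := if b then j |: S else S :\ j.

Definition side c S : {set T} := if c then S else ~: S.

Lemma card_upd b S j : #|upd b S j| = (#|S| + b - (j \in S))%N.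
Proof.
rewrite /upd; case: b; first by rewrite cardsU1; case: (j \in S) => /=; lia.
by rewrite [in RHS](cardsD1 j S); case: (j \in S) => /=; lia.
Qed.

Lemma natr_card_upd (R : ringType) b S j :
  #|upd b S j|%:R = #|S|%:R + b%:R - (j \in S)%:R :> R.
Proof.
rewrite card_upd natrB; first by rewrite natrD.
case/boolP: (j \in S) => // jS.
by rewrite (leq_trans _ (leq_addr _ _)) // card_gt0; apply/set0Pn; exists j.
Qed.

Lemma side_upd c x S j :
  side c (upd (x \in S) S j) = upd (x \in side c S) (side c S) j.
Proof.
case: c => //=; rewrite inE /upd.
by case: (x \in S); apply/setP => l; rewrite !inE ?negb_or ?negb_and ?negbK.
Qed.

Lemma mem_side b c x S : x \in side b S -> (x \in side c S) = (c == b).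
Proof. by case: b c => [] []; rewrite //= inE; case: (x \in S). Qed.

Lemma sum_setD1_split (R : ringType) S j (F : T -> R) :
  \sum_(l in S) F l = \sum_(l in S :\ j) F l + (j \in S)%:R * F j.
Proof.
case/boolP: (j \in S) => jS; first by rewrite (big_setD1 j jS) addrC mul1r.
rewrite mul0r addr0; apply: eq_bigl => l; rewrite !inE.
by case: eqP => // ->; rewrite (negPf jS).
Qed.

Lemma sum_upd (R : ringType) b S j (v : R) (a : T -> R) :
  \sum_(l in upd b S j) (if l == j then v else a l)
  = \sum_(l in S) a l - (j \in S)%:R * a j + b%:R * v.
Proof.
have updD1 : upd b S j :\ j = S :\ j.
  by apply/setP => l; case: b; rewrite !inE; case: eqP.
have mem_upd : j \in upd b S j = b by case: (b); rewrite !inE eqxx.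
rewrite (sum_setD1_split _ j) updD1 mem_upd eqxx [in RHS](sum_setD1_split _ j) addrK.
by congr (_ + _); apply: eq_bigr => l; rewrite !inE => /andP[/negPf->].
Qed.

Definition avg (R : fieldType) S (a : T -> R) : R := (#|S|%:R)^-1 * \sum_(l in S) a l.

Lemma sum_avg (R : numFieldType) S (a : T -> R) :
  (0 < #|S|)%N -> \sum_(l in S) a l = #|S|%:R * avg S a.
Proof. by move=> S0; rewrite /avg mulrA mulfV ?mul1r // pnatr_eq0 -lt0n. Qed.

Lemma eq_avg (R : fieldType) S (a a' : T -> R) : a =1 a' -> avg S a = avg S a'.
Proof. by move=> eq_a; rewrite /avg (eq_bigr _ (fun l _ => eq_a l)). Qed.

End SetUpdate.

Section OneStep.
Variables (R : realFieldType) (N : nat) (s : R).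
Implicit Types (C : {set 'I_N}) (d : draw N) (a : 'I_N -> R) (bm bk c : bool).

Lemma card_step C d : #|step C d| = (#|C| + (d_mu d \in C) - (d_ka d \in C))%N.
Proof. exact: card_upd. Qed.

Definition drawc C bm bk d : bool := (d_mu d \in side bm C) && (d_ka d \in side bk C).

Lemma card_step_up C d : (#|step C d| == #|C|.+1) = drawc C true false d.
Proof. by rewrite card_step /drawc /= inE; case: (_ \in C); case: (_ \in C); lia. Qed.

Lemma card_step_down C d :
  (0 < #|C|)%N -> (#|step C d| == #|C|.-1) = drawc C false true d.
Proof. by rewrite card_step /drawc /= inE; case: (_ \in C); case: (_ \in C); lia. Qed.

Lemma card_step_stay C d : (0 < #|C|)%N ->
  (#|step C d| == #|C|) = drawc C true true d || drawc C false false d.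
Proof.
by rewrite card_step /drawc /= !inE; case: (_ \in C); case: (_ \in C) => /=; lia.
Qed.

Lemma sum_card_step_stay C (F : draw N -> R) : (0 < #|C|)%N ->
  \sum_(d | #|step C d| == #|C|) F d
  = \sum_(d | drawc C true true d) F d + \sum_(d | drawc C false false d) F d.
Proof.
move=> C0; rewrite (bigID (drawc C true true)) /=; congr (_ + _).
all: apply: eq_bigl => d.
  by rewrite card_step_stay //; case: (drawc C true true d); rewrite ?andbF.
by rewrite card_step_stay // /drawc /= !inE; case: (_ \in C); case: (_ \in C).
Qed.

Lemma card_setC_ord C : #|~: C| = (N - #|C|)%N.
Proof. by rewrite cardsCs card_ord setCK. Qed.

Lemma card_side c C : #|side c C| = if c then #|C| else (N - #|C|)%N.
Proof. by case: c => //; apply: card_setC_ord. Qed.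

Lemma card_side_gt0 c C : (0 < #|C| < N)%N -> (0 < #|side c C|)%N.
Proof. by rewrite card_side; case: c => /andP[]; lia. Qed.

Definition ap a d : 'I_N -> R :=
  fun l => if l == d_ka d then (a (d_mu d) + a (d_pi d)) / 2 else a l.

Lemma avg_step c C a d :
  avg (side c (step C d)) (ap a d)
  = (#|side c C|%:R + (d_mu d \in side c C)%:R - (d_ka d \in side c C)%:R)^-1
    * (\sum_(l in side c C) a l - (d_ka d \in side c C)%:R * a (d_ka d)
       + (d_mu d \in side c C)%:R * ((a (d_mu d) + a (d_pi d)) / 2)).
Proof. by rewrite /avg /step -/(upd _ C _) side_upd natr_card_upd /ap sum_upd. Qed.

Lemma sum_dweight C : \sum_j dweight s C j = #|C|%:R + (N - #|C|)%:R * (1 + s).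
Proof.
rewrite (bigID (mem C)) /= (eq_bigr (fun=> 1)) => [|j jC]; last by rewrite /dweight jC.
rewrite [X in _ + X](eq_bigr (fun=> 1 + s)) => [|j /negPf jC]; last by rewrite /dweight jC.
rewrite !sumr_const -[(1 + s) *+ _]mulr_natl -(card_side false C).
by congr (_ + _%:R * _); apply: eq_card => j; rewrite !inE.
Qed.

Definition drawc_prob (k : nat) bm bk : R :=
  (if bk then 1 else 1 + s) / (N%:R * (k%:R + (N - k)%:R * (1 + s)))
  * (if bm then k else N - k)%N%:R * (if bk then k else N - k)%N%:R.

Lemma tprob_drawc C bm bk d : drawc C bm bk d ->
  tprob s C d
  = (if bk then 1 else 1 + s) / (N%:R * N%:R * (#|C|%:R + (N - #|C|)%:R * (1 + s))).
Proof.
case/andP=> _; rewrite /tprob sum_dweight /dweight !invfM.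
by case: bk; rewrite /= ?inE; case: (d_ka d \in C) => // _; ring.
Qed.

Lemma sum_draw_prod (A B : {set 'I_N}) (f g h : 'I_N -> R) :
  \sum_(d : draw N | (d_mu d \in A) && (d_ka d \in B))
     f (d_mu d) * g (d_pi d) * h (d_ka d)
  = (\sum_(i in A) f i) * (\sum_j g j) * (\sum_(l in B) h l).
Proof.
transitivity (\sum_(p : 'I_N * 'I_N | p.1 \in A) \sum_(l in B) f p.1 * g p.2 * h l).
  by rewrite pair_big.
transitivity (\sum_(i in A) \sum_j \sum_(l in B) f i * g j * h l).
  by rewrite [RHS]pair_big; apply: eq_bigl => p; rewrite andbT.
rewrite -mulrA big_distrl /=; apply: eq_bigr => i _.
rewrite big_distrl /= big_distrr /=; apply: eq_bigr => j _.
by rewrite !big_distrr /=; apply: eq_bigr => l _; rewrite !mulrA.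
Qed.

Lemma sum_drawc_affine C a bm bk (c0 c1 c2 c3 : R) : (0 < #|C| < N)%N ->
  \sum_(d | drawc C bm bk d)
     tprob s C d * (c0 + c1 * a (d_mu d) + c2 * a (d_pi d) + c3 * a (d_ka d))
  = drawc_prob #|C| bm bk
    * (c0 + c1 * avg (side bm C) a + c2 * ((N%:R)^-1 * \sum_j a j) + c3 * avg (side bk C) a).
Proof.
move=> HC; have side_gt0 b := card_side_gt0 b HC.
have nside0 b : ((if b then #|C| else N - #|C|)%N%:R : R) != 0.
  by rewrite -card_side pnatr_eq0 -lt0n.
have N0 : (N%:R : R) != 0 by rewrite pnatr_eq0; case/andP: HC; lia.
pose K := (if bk then 1 else 1 + s)
          / (N%:R * N%:R * (#|C|%:R + (N - #|C|)%:R * (1 + s))).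
rewrite (eq_bigr (fun d => K * (c0 * 1 * 1 + c1 * a (d_mu d) * 1 * 1
  + c2 * a (d_pi d) * 1 + c3 * 1 * a (d_ka d)))); last first.
  by move=> d /tprob_drawc->; rewrite !mulr1.
rewrite -mulr_sumr !big_split /= /drawc.
rewrite (sum_draw_prod _ _ (fun=> c0) (fun=> 1) (fun=> 1)).
rewrite (sum_draw_prod _ _ (fun i => c1 * a i) (fun=> 1) (fun=> 1)).
rewrite (sum_draw_prod _ _ (fun=> c2) a (fun=> 1)).
rewrite (sum_draw_prod _ _ (fun=> c3) (fun=> 1) a).
rewrite -!mulr_sumr !sumr_const card_ord !(sum_avg _ (side_gt0 _)) !card_side.
rewrite -[c0 *+ _]mulr_natr -[c2 *+ _]mulr_natr -[c3 *+ _]mulr_natr.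
rewrite /K /drawc_prob !invfM.
have nA0 := nside0 bm; have nB0 := nside0 bk.
set nA := (if bm then _ else _)%:R in nA0 *.
set nB := (if bk then _ else _)%:R in nB0 *.
(* Hiding the normalising constant keeps [field] from asking for it to be nonzero. *)
set iW := (_ + _)^-1.
by field.
Qed.

Lemma sum_drawc_avg C a bm bk c : (0 < #|C| < N)%N ->
  \sum_(d | drawc C bm bk d) tprob s C d * avg (side c (step C d)) (ap a d)
  = drawc_prob #|C| bm bk
    * ((#|side c C|%:R + (c == bm)%:R - (c == bk)%:R)^-1
       * (#|side c C|%:R * avg (side c C) a - (c == bk)%:R * avg (side bk C) a
          + (c == bm)%:R * ((avg (side bm C) a + (N%:R)^-1 * \sum_j a j) / 2))).
Proof.
move=> HC; pose K := (#|side c C|%:R + (c == bm)%:R - (c == bk)%:R : R)^-1.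
rewrite (eq_bigr (fun d => tprob s C d * (K * \sum_(l in side c C) a l
    + K * (c == bm)%:R / 2 * a (d_mu d) + K * (c == bm)%:R / 2 * a (d_pi d)
    + - (K * (c == bk)%:R) * a (d_ka d)))); last first.
  by move=> d /andP[dm dk]; rewrite avg_step (mem_side c dm) (mem_side c dk) -/K; ring.
by rewrite sum_drawc_affine // (sum_avg _ (card_side_gt0 c HC)) -/K; ring.
Qed.

Lemma sum_drawc_tprob C bm bk : (0 < #|C| < N)%N ->
  \sum_(d | drawc C bm bk d) tprob s C d = drawc_prob #|C| bm bk.
Proof.
move=> HC; move: (sum_drawc_affine (fun=> 0) bm bk 1 0 0 0 HC).
rewrite !mul0r !addr0 mulr1 => <-.
by apply: eq_bigr => d _; rewrite ?mul0r ?addr0 ?mulr1.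
Qed.

Lemma sum_split_avg C a : (0 < #|C| < N)%N ->
  \sum_j a j = #|C|%:R * avg C a + (N - #|C|)%:R * avg (~: C) a.
Proof.
move=> /[dup] HC /andP[C0 _].
rewrite -(card_side false) -!sum_avg ?(card_side_gt0 false HC) //.
by rewrite (bigID (mem C)); congr (_ + _); apply: eq_bigl => j; rewrite ?inE.
Qed.

End OneStep.

Section StepSums.
Variables (R : realFieldType) (N : nat) (s : R).
Variables (C : {set 'I_N}) (a : 'I_N -> R) (k : nat).
Hypotheses (hCk : #|C| = k) (hk : (0 < k < N)%N).

Let HC : (0 < #|C| < N)%N. Proof. by rewrite hCk. Qed.
Let C0 : (0 < #|C|)%N. Proof. by case/andP: HC. Qed.
Let k0 : (k%:R : R) != 0. Proof. by rewrite pnatr_eq0; case/andP: hk; lia. Qed.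
Let N0 : (N%:R : R) != 0. Proof. by rewrite pnatr_eq0; case/andP: hk; lia. Qed.
Let Nk : (N - k)%:R = N%:R - k%:R :> R. Proof. by rewrite natrB //; case/andP: hk; lia. Qed.
Let Nk0 : (N%:R - k%:R : R) != 0. Proof. by rewrite -Nk pnatr_eq0; case/andP: hk; lia. Qed.
Let k1_0 : (k%:R + 1 : R) != 0. Proof. by rewrite natr1 pnatr_eq0. Qed.
Let nonzero := (k0, N0, Nk0, k1_0).

Lemma sum_tprob_up :
  \sum_(d | #|step C d| == k.+1) tprob s C d = drawc_prob N s k true false.
Proof. by rewrite -hCk (eq_bigl _ _ (card_step_up C)) sum_drawc_tprob. Qed.

Lemma sum_tprob_avg_up :
  let b := (N%:R - k%:R) / (2 * N%:R * (k%:R + 1)) in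
  \sum_(d | #|step C d| == k.+1) tprob s C d * avg (step C d) (ap a d)
  = drawc_prob N s k true false * ((1 - b) * avg C a + b * avg (~: C) a).
Proof.
rewrite /= -hCk (eq_bigl _ _ (card_step_up C)).
rewrite (sum_drawc_avg s a true false true HC) /=.
by rewrite (sum_split_avg a HC) hCk Nk; congr (_ * _); field; rewrite ?nonzero.
Qed.

Lemma sum_tprob_avgC_up : k.+1 != N ->
  \sum_(d | #|step C d| == k.+1) tprob s C d * avg (~: step C d) (ap a d)
  = drawc_prob N s k true false * avg (~: C) a.
Proof.
move=> kN; have Nk1 : (N%:R - k%:R - 1 : R) != 0.
  by rewrite -Nk subr_eq0 (_ : 1 = 1%:R) // eqr_nat; case/andP: hk => _; lia.
rewrite -hCk (eq_bigl _ _ (card_step_up C)).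
rewrite (sum_drawc_avg s a true false false HC) /=.
by rewrite card_setC_ord hCk Nk; congr (_ * _); field; rewrite ?nonzero ?Nk1.
Qed.

Lemma sum_tprob_down :
  \sum_(d | #|step C d| == k.-1) tprob s C d = drawc_prob N s k false true.
Proof.
by rewrite -hCk (eq_bigl _ _ (fun d => card_step_down d C0)) sum_drawc_tprob.
Qed.

Lemma sum_tprob_avg_down : k.-1 != 0%N ->
  \sum_(d | #|step C d| == k.-1) tprob s C d * avg (step C d) (ap a d)
  = drawc_prob N s k false true * avg C a.
Proof.
move=> k1; have km1_0 : (k%:R - 1 : R) != 0.
  by rewrite subr_eq0 (_ : 1 = 1%:R) // eqr_nat; case/andP: hk; lia.
rewrite -hCk (eq_bigl _ _ (fun d => card_step_down d C0)).
rewrite (sum_drawc_avg s a false true true HC) /=.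
by rewrite hCk; congr (_ * _); field; rewrite ?nonzero ?km1_0.
Qed.

Lemma sum_tprob_avgC_down :
  let c := k%:R / (2 * N%:R * (N%:R - k%:R + 1)) in
  \sum_(d | #|step C d| == k.-1) tprob s C d * avg (~: step C d) (ap a d)
  = drawc_prob N s k false true * (c * avg C a + (1 - c) * avg (~: C) a).
Proof.
have Nk1 : (N%:R - k%:R + 1 : R) != 0 by rewrite -Nk natr1 pnatr_eq0.
rewrite /= -hCk (eq_bigl _ _ (fun d => card_step_down d C0)).
rewrite (sum_drawc_avg s a false true false HC) /=.
rewrite (sum_split_avg a HC) card_setC_ord hCk Nk.
by congr (_ * _); field; rewrite ?nonzero ?Nk1.
Qed.

Hypothesis Hs : 0 < s.

Let W0 : (k%:R + (N%:R - k%:R) * (1 + s) : R) != 0.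
Proof.
have kpos : 0 < (k%:R : R) by rewrite ltr0n; case/andP: hk.
have Nkpos := ler0n R (N - k); have Nks := mulr_ge0 Nkpos (ltW Hs).
by rewrite -Nk gt_eqF //; nra.
Qed.

Let D0 : (k%:R ^+ 2 + (1 + s) * (N%:R - k%:R) ^+ 2 : R) != 0.
Proof.
have k2 : 0 < (k%:R : R) ^+ 2 by rewrite exprn_gt0 // ltr0n; case/andP: hk.
have m2 := sqr_ge0 (N%:R - k%:R : R); have sm2 := mulr_ge0 (ltW Hs) m2.
by rewrite gt_eqF //; nra.
Qed.

Lemma sum_tprob_stay :
  \sum_(d | #|step C d| == k) tprob s C d
  = drawc_prob N s k true true + drawc_prob N s k false false.
Proof. by rewrite -hCk sum_card_step_stay // !sum_drawc_tprob. Qed.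

Lemma sum_tprob_avg_stay :
  let D := k%:R ^+ 2 + (1 + s) * (N%:R - k%:R) ^+ 2 in
  let a0 := k%:R ^+ 2 / D in
  let a1 := (1 + s) * (N%:R - k%:R) ^+ 2 / D in
  let p := (N%:R - k%:R) / (2 * k%:R * N%:R) in
  \sum_(d | #|step C d| == k) tprob s C d * avg (step C d) (ap a d)
  = (drawc_prob N s k true true + drawc_prob N s k false false)
    * ((a0 * (1 - p) + a1) * avg C a + a0 * p * avg (~: C) a).
Proof.
rewrite /= -hCk sum_card_step_stay // (sum_drawc_avg s a true true true HC).
rewrite (sum_drawc_avg s a false false true HC) /= (sum_split_avg a HC).
by rewrite hCk /drawc_prob /= Nk; field; rewrite ?nonzero ?W0 ?D0.
Qed.

Lemma sum_tprob_avgC_stay :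
  let D := k%:R ^+ 2 + (1 + s) * (N%:R - k%:R) ^+ 2 in
  let a0 := k%:R ^+ 2 / D in
  let a1 := (1 + s) * (N%:R - k%:R) ^+ 2 / D in
  let q := k%:R / (2 * N%:R * (N%:R - k%:R)) in
  \sum_(d | #|step C d| == k) tprob s C d * avg (~: step C d) (ap a d)
  = (drawc_prob N s k true true + drawc_prob N s k false false)
    * (a1 * q * avg C a + (a0 + a1 * (1 - q)) * avg (~: C) a).
Proof.
rewrite /= -hCk sum_card_step_stay // (sum_drawc_avg s a true true false HC).
rewrite (sum_drawc_avg s a false false false HC) /= (sum_split_avg a HC) card_setC_ord.
by rewrite hCk /drawc_prob /= Nk; field; rewrite ?nonzero ?W0 ?D0.
Qed.

End StepSums.

Lemma sum_tuple_rcons (T : finType) (V : nmodType) m (F : seq T -> V) :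
  \sum_(x : m.+1.-tuple T) F x = \sum_(t : m.-tuple T) \sum_(d : T) F (rcons t d).
Proof.
rewrite pair_bigA /=.
pose g (x : m.+1.-tuple T) :=
  ([tuple of belast (thead x) (behead x)], last (thead x) (behead x)).
rewrite (reindex (fun p : m.-tuple T * T => [tuple of rcons p.1 p.2])) //=.
have cons_head (x : m.+1.-tuple T) : (x : seq T) = thead x :: behead x.
  by rewrite {1}(tuple_eta x).
exists g => [[t d] _ | x _]; last by apply: val_inj; rewrite /= -lastI -cons_head.
set u := [tuple of rcons t d].
have /rcons_inj[e1 e2] :
    rcons t d = rcons (belast (thead u) (behead u)) (last (thead u) (behead u)).
  by rewrite -lastI -cons_head.
by rewrite /g -e2; congr (_, _); apply: val_inj; rewrite /= -e1.
Qed.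

Section Paths.
Variables (R : realFieldType) (N : nat) (s : R) (Y0 : {set 'I_N}).
Implicit Types (ds t : seq (draw N)) (d : draw N) (y : seq nat).

Lemma config_rcons t d : config Y0 (rcons t d) = step (config Y0 t) d.
Proof. by rewrite /config foldl_rcons. Qed.

Lemma pathprob_rcons t d :
  pathprob s Y0 (rcons t d) = pathprob s Y0 t * tprob s (config Y0 t) d.
Proof.
rewrite /config; elim: t Y0 => [|d' t IH] Y /=; first by rewrite mul1r mulr1.
by rewrite IH mulrA.
Qed.

Lemma nth_Ypath ds i :
  (i <= size ds)%N -> nth 0%N (Ypath Y0 ds) i = #|config Y0 (take i ds)|.
Proof. by move=> hi; rewrite /Ypath (nth_map 0%N) ?size_iota // nth_iota. Qed.

Lemma nth_Ypath_size ds : nth 0%N (Ypath Y0 ds) (size ds) = #|config Y0 ds|.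
Proof. by rewrite nth_Ypath // take_size. Qed.

Lemma size_Ypath ds : size (Ypath Y0 ds) = (size ds).+1.
Proof. by rewrite size_map size_iota. Qed.

Lemma Ypath_rcons t d :
  Ypath Y0 (rcons t d) = rcons (Ypath Y0 t) #|step (config Y0 t) d|.
Proof.
apply: (@eq_from_nth _ 0%N) => [|i]; first by rewrite size_rcons !size_Ypath size_rcons.
rewrite size_Ypath size_rcons ltnS => hi.
rewrite nth_Ypath ?size_rcons // nth_rcons size_Ypath.
case: ltngtP hi => // [hi _|-> _].
  by rewrite ltnS in hi; rewrite nth_Ypath // -cats1 takel_cat.
by rewrite take_oversize ?size_rcons // config_rcons.
Qed.

Lemma Ypath_near ds i : (i < size ds)%N ->
  (nth 0 (Ypath Y0 ds) i.+1 <= (nth 0 (Ypath Y0 ds) i).+1)%N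
  && (nth 0 (Ypath Y0 ds) i <= (nth 0 (Ypath Y0 ds) i.+1).+1)%N.
Proof.
case: ds => // d0 ds hi; rewrite !nth_Ypath ?(ltnW hi) //.
rewrite (take_nth d0 hi) config_rcons card_step.
by case: (_ \in _); case: (_ \in _) => /=; lia.
Qed.

Lemma Yprob_gt0_path m y :
  0 < Yprob s Y0 m y -> exists ds : m.-tuple (draw N), Ypath Y0 ds = y.
Proof.
case: (pickP (fun ds : m.-tuple (draw N) => Ypath Y0 ds == y)) => [ds /eqP|none].
  by exists ds.
by rewrite /Yprob big_pred0 // ltxx.
Qed.

Definition aw ds (l : 'I_N) : R := \sum_(l' in Y0) Aw R ds l l'.

Lemma aw_rcons t d : aw (rcons t d) =1 ap (aw t) d.
Proof.
move=> l; rewrite /aw /ap /Aw rev_rcons /=; case: eqP => // _.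
by rewrite -mulr_suml big_split.
Qed.

Lemma XiB_avg ds : XiB R Y0 ds = avg (~: config Y0 ds) (aw ds).
Proof. by rewrite /XiB /avg card_setC_ord. Qed.

End Paths.

Section Conditioning.
Variables (R : realFieldType) (N : nat) (s : R) (Y0 : {set 'I_N}).
Implicit Types (X : seq (draw N) -> R) (y : seq nat).

Definition Ysum X n y : R :=
  \sum_(ds : n.-tuple (draw N) | Ypath Y0 ds == y) pathprob s Y0 ds * X ds.

Lemma YprobE n y : Yprob s Y0 n y = Ysum (fun=> 1) n y.
Proof. by apply: eq_bigr => ds _; rewrite mulr1. Qed.

Lemma condEE X n y : condE s X Y0 n y = Ysum X n y / Yprob s Y0 n y.
Proof. by []. Qed.

Lemma Ysum_lin X1 X2 (al be : R) n y :
  Ysum (fun ds => al * X1 ds + be * X2 ds) n y = al * Ysum X1 n y + be * Ysum X2 n y.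
Proof.
rewrite /Ysum !mulr_sumr -big_split /=.
by apply: eq_bigr => ds _; ring.
Qed.

Lemma condE_lin X1 X2 (al be : R) n y :
  condE s (fun ds => al * X1 ds + be * X2 ds) Y0 n y
  = al * condE s X1 Y0 n y + be * condE s X2 Y0 n y.
Proof. by rewrite !condEE Ysum_lin mulrDl !mulrA. Qed.

Lemma condE_ext X X' n y : X =1 X' -> condE s X Y0 n y = condE s X' Y0 n y.
Proof. by move=> eqX; rewrite !condEE /Ysum; under eq_bigr do rewrite eqX. Qed.

Lemma Ysum_next X n y : size y = n.+2 ->
  Ysum X n.+1 y
  = \sum_(t : n.-tuple (draw N) | Ypath Y0 t == take n.+1 y) pathprob s Y0 t
      * \sum_(d | #|step (config Y0 t) d| == nth 0%N y n.+1)
          tprob s (config Y0 t) d * X (rcons t d).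
Proof.
move=> hy; have y_rcons : y = rcons (take n.+1 y) (nth 0%N y n.+1).
  by rewrite -take_nth ?hy // take_oversize ?hy.
rewrite /Ysum big_mkcond
  (sum_tuple_rcons n (fun ds => if Ypath Y0 ds == y then pathprob s Y0 ds * X ds else 0)).
rewrite [RHS]big_mkcond; apply: eq_bigr => t _ /=.
under eq_bigr => d _ do
  rewrite Ypath_rcons [X in _ == X]y_rcons eqseq_rcons pathprob_rcons.
case: (Ypath Y0 t == take n.+1 y); last by rewrite big1.
by rewrite -big_mkcond mulr_sumr; apply: eq_bigr => d _; rewrite mulrA.
Qed.

Lemma Vcond_avg m z :
  Vcond s Y0 m z = condE s (fun ds => avg (~: config Y0 ds) (aw R Y0 ds)) Y0 m z.
Proof. exact: condE_ext (XiB_avg R Y0). Qed.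

Lemma condE_next_avg (F : {set 'I_N} -> {set 'I_N}) n y k k' (rho al be : R) :
  size y = n.+2 -> 0 < Yprob s Y0 n.+1 y -> nth 0%N y n = k -> nth 0%N y n.+1 = k' ->
  (forall C : {set 'I_N}, #|C| = k -> \sum_(d | #|step C d| == k') tprob s C d = rho) ->
  (forall (C : {set 'I_N}) (a : 'I_N -> R), #|C| = k ->
     \sum_(d | #|step C d| == k') tprob s C d * avg (F (step C d)) (ap a d)
     = rho * (al * avg C a + be * avg (~: C) a)) ->
  condE s (fun ds => avg (F (config Y0 ds)) (aw R Y0 ds)) Y0 n.+1 y
  = al * Ucond s Y0 n (take n.+1 y) + be * Vcond s Y0 n (take n.+1 y).
Proof.
move=> hy hpos hk hk' hrho havg.
(* On the event [Ypath = take n.+1 y] the configuration has [k] sites, so the one-step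
   sums do not depend on the past and factor out. *)
have card_config (t : n.-tuple (draw N)) :
    Ypath Y0 t == take n.+1 y -> #|config Y0 t| = k.
  move=> /eqP ht; rewrite -hk -(nth_take 0%N (ltnSn n)) -ht.
  by have := nth_Ypath_size Y0 t; rewrite size_tuple.
have Yprob_next : Yprob s Y0 n.+1 y = rho * Yprob s Y0 n (take n.+1 y).
  rewrite !YprobE Ysum_next // /Ysum mulr_sumr; apply: eq_bigr => t /card_config ht.
  by rewrite hk' (eq_bigr _ (fun d _ => mulr1 _)) hrho // mulr1 mulrC.
have [rho0 Yprob0] : rho != 0 /\ Yprob s Y0 n (take n.+1 y) != 0.
  by apply/andP; rewrite -negb_or -mulf_eq0 -Yprob_next gt_eqF.
rewrite condEE Yprob_next Ysum_next //.
rewrite (eq_bigr (fun t : n.-tuple (draw N) =>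
  rho * (pathprob s Y0 t * (al * XiA R Y0 t + be * XiB R Y0 t)))).
  rewrite -mulr_sumr -mulf_div divff // mul1r.
  by rewrite -(condEE (fun ds => al * XiA R Y0 ds + be * XiB R Y0 ds)) condE_lin.
move=> t /card_config ht; rewrite mulrCA; congr (_ * _).
under eq_bigr do rewrite config_rcons (eq_avg _ (aw_rcons R Y0 t _)).
by rewrite hk' havg // XiB_avg.
Qed.

End Conditioning.

Section Transitions.
Variables (R : realFieldType) (N : nat) (s : R) (Y0 : {set 'I_N}).
Variables (n k : nat) (y : seq nat).
Hypotheses (hy : size y = n.+2) (hpos : 0 < Yprob s Y0 n.+1 y).
Hypotheses (hk : nth 0%N y n = k) (hkN : (0 < k < N)%N).

Let U := Ucond s Y0 n (take n.+1 y).
Let V := Vcond s Y0 n (take n.+1 y).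

Lemma UV_up : nth 0%N y n.+1 = k.+1 ->
  let b := (N%:R - k%:R) / (2 * N%:R * (k%:R + 1)) in
  Ucond s Y0 n.+1 y = (1 - b) * U + b * V /\ (k.+1 != N -> Vcond s Y0 n.+1 y = V).
Proof.
move=> hk1 b; have prob (C : {set 'I_N}) (hC : #|C| = k) := sum_tprob_up s hC hkN.
split.
  by rewrite /Ucond (condE_next_avg (F := id) hy hpos hk hk1 prob
    (fun C a hC => sum_tprob_avg_up s a hC hkN)).
move=> kN; rewrite Vcond_avg.
rewrite (condE_next_avg (F := @setC _) (al := 0) (be := 1) hy hpos hk hk1 prob).
  by rewrite mul0r add0r mul1r.
by move=> C a hC; rewrite mul0r add0r mul1r sum_tprob_avgC_up.
Qed.

Lemma UV_down : nth 0%N y n.+1 = k.-1 ->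
  let c := k%:R / (2 * N%:R * (N%:R - k%:R + 1)) in
  (k.-1 != 0%N -> Ucond s Y0 n.+1 y = U) /\ Vcond s Y0 n.+1 y = c * U + (1 - c) * V.
Proof.
move=> hk1 c; have prob (C : {set 'I_N}) (hC : #|C| = k) := sum_tprob_down s hC hkN.
split; last first.
  by rewrite Vcond_avg (condE_next_avg (F := @setC _) hy hpos hk hk1 prob
    (fun C a hC => sum_tprob_avgC_down s a hC hkN)).
move=> k1; rewrite /Ucond (condE_next_avg (F := id) (al := 1) (be := 0) hy hpos hk hk1 prob).
  by rewrite mul1r mul0r addr0.
by move=> C a hC; rewrite mul1r mul0r addr0 sum_tprob_avg_down.
Qed.

Hypothesis Hs : 0 < s.

Lemma UV_stay : nth 0%N y n.+1 = k ->
  let D := k%:R ^+ 2 + (1 + s) * (N%:R - k%:R) ^+ 2 in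
  let a0 := k%:R ^+ 2 / D in
  let a1 := (1 + s) * (N%:R - k%:R) ^+ 2 / D in
  let p := (N%:R - k%:R) / (2 * k%:R * N%:R) in
  let q := k%:R / (2 * N%:R * (N%:R - k%:R)) in
  Ucond s Y0 n.+1 y = a0 * ((1 - p) * U + p * V) + a1 * U /\
  Vcond s Y0 n.+1 y = a0 * V + a1 * (q * U + (1 - q) * V).
Proof.
move=> hk1 D a0 a1 p q; have prob (C : {set 'I_N}) (hC : #|C| = k) := sum_tprob_stay s hC hkN.
split.
  rewrite /Ucond (condE_next_avg (F := id) hy hpos hk hk1 prob
    (fun C a hC => sum_tprob_avg_stay a hC hkN Hs)).
  by rewrite /a0 /a1 /p /D /U /V; ring.
rewrite Vcond_avg (condE_next_avg (F := @setC _) hy hpos hk hk1 prob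
  (fun C a hC => sum_tprob_avgC_stay a hC hkN Hs)).
by rewrite /a0 /a1 /q /D /U /V; ring.
Qed.

End Transitions.

Section Absorption.
Variables (R : realFieldType) (N : nat) (s : R) (Y0 : {set 'I_N}).

Lemma UV_absorb m y :
  size y = m.+1 -> 0 < Yprob s Y0 m y -> (0 < #|Y0| < N)%N ->
  let U := Ucond s Y0 m.-1 (take m y) in
  let V := Vcond s Y0 m.-1 (take m y) in
  let e : R := (2 * N%:R ^+ 2)^-1 in
  (forall i, (i < m)%N -> nth 0%N y i != 0%N /\ nth 0%N y i != N) ->
  (nth 0%N y m = 0%N -> Vcond s Y0 m y = e * U + (1 - e) * V) /\
  (nth 0%N y m = N -> Ucond s Y0 m y = (1 - e) * U + e * V).
Proof.
move=> hy hpos hY0 U V e hi.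
have [ds hds] := Yprob_gt0_path hpos.
case: m hy hpos ds hds hi @U @V => [|n] hy hpos ds hds hi U V.
  have -> : nth 0%N y 0 = #|Y0| by rewrite -hds nth_Ypath // take0.
  by split=> h; move: hY0; rewrite h ltnn // andbF.
have [yn0 ynN] := hi n (ltnSn n).
have ynle : (nth 0%N y n <= N)%N.
  by rewrite -hds nth_Ypath ?size_tuple // (leq_trans (max_card _)) ?card_ord.
have hkN : (0 < nth 0%N y n < N)%N by rewrite lt0n yn0 ltn_neqAle ynN.
have := Ypath_near Y0 (ds := ds) (i := n); rewrite hds size_tuple => /(_ (ltnSn n)) near.
have N0 : (N%:R : R) != 0 by rewrite pnatr_eq0; lia.
split=> hm.
- have k1 : nth 0%N y n = 1%N by lia.
  have hk1 : nth 0%N y n.+1 = (nth 0%N y n).-1 by rewrite hm k1.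
  have [_ ->] := UV_down hy hpos erefl hkN hk1.
  by rewrite /e k1; congr (_ * _ + (1 - _) * _); field.
- have k1 : nth 0%N y n = N.-1 by lia.
  have hk1 : nth 0%N y n.+1 = (nth 0%N y n).+1 by rewrite hm k1; lia.
  have [-> _] := UV_up hy hpos erefl hkN hk1.
  have NR1 : (N.-1)%:R = N%:R - 1 :> R by rewrite -subn1 natrB //; lia.
  by rewrite /e k1 NR1; congr ((1 - _) * _ + _ * _); field.
Qed.

End Absorption.

Theorem proposition3 (R : realFieldType) (N : nat) (s : R)
  (HN : (2 <= N)%N) (Hs : 0 < s) (Y0 : {set 'I_N}) :
  (* parts (1)-(3): y = (y_0, ..., y_{n+1}) a Y-path of positive probability *)
  (forall (n k : nat) (y : seq nat),
     size y = n.+2 -> 0 < Yprob s Y0 n.+1 y ->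
     nth 0%N y n = k -> (1 <= k <= N - 1)%N ->
     let U := Ucond s Y0 n (take n.+1 y) in
     let V := Vcond s Y0 n (take n.+1 y) in
     let U' := Ucond s Y0 n.+1 y in
     let V' := Vcond s Y0 n.+1 y in
     let kR : R := k%:R in
     let NR : R := N%:R in
     [/\ (nth 0%N y n.+1 = k.+1 ->
            let b := (NR - kR) / (2 * NR * (kR + 1)) in
            U' = (1 - b) * U + b * V /\
            (k.+1 != N -> V' = V)),
         (nth 0%N y n.+1 = k.-1 ->
            let c := kR / (2 * NR * (NR - kR + 1)) in
            (k.-1 != 0%N -> U' = U) /\
            V' = c * U + (1 - c) * V) &
         (nth 0%N y n.+1 = k ->
            let D := kR ^+ 2 + (1 + s) * (NR - kR) ^+ 2 in
            let a0 := kR ^+ 2 / D in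
            let a1 := (1 + s) * (NR - kR) ^+ 2 / D in
            let p := (NR - kR) / (2 * kR * NR) in
            let q := kR / (2 * NR * (NR - kR)) in
            U' = a0 * ((1 - p) * U + p * V) + a1 * U /\
            V' = a0 * V + a1 * (q * U + (1 - q) * V))])
  /\
  (* "in particular": on {T_0 = m < T_N}, resp. {T_N = m < T_0} *)
  (forall (m : nat) (y : seq nat),
     size y = m.+1 -> 0 < Yprob s Y0 m y ->
     (0 < #|Y0| < N)%N ->
     let U := Ucond s Y0 m.-1 (take m y) in
     let V := Vcond s Y0 m.-1 (take m y) in
     let U' := Ucond s Y0 m y in
     let V' := Vcond s Y0 m y in
     let e : R := (2 * N%:R ^+ 2)^-1 in
     (forall i, (i < m)%N -> nth 0%N y i != 0%N /\ nth 0%N y i != N) ->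
     (nth 0%N y m = 0%N -> V' = e * U + (1 - e) * V) /\
     (nth 0%N y m = N -> U' = (1 - e) * U + e * V)).
Proof.
split; last exact: UV_absorb.
move=> n k y hy hpos hyn hk U V U' V' kR NR.
have hkN : (0 < k < N)%N by case/andP: hk => k1 kN; apply/andP; split; lia.
by split=> hy1; [exact: UV_up | exact: UV_down | exact: UV_stay].
Qed.
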